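(* Let $\Gamma$ be any art gallery (not necessarily normal). If a configuration consisting of one or two guards visually covers the walls of $\Gamma$, then this configuration visually covers all of $\Gamma$.
   Context: An art gallery $\Gamma$ is a simple polygon in the plane (closed region: boundary together with interior), whose boundary (the walls) consists of finitely many line segments. A guard is a point of $\Gamma$; a guard $G$ visually covers $A\in\Gamma$ if the segment $GA$ lies entirely in $\Gamma$. A configuration of guards is a finite set $F$ of points of $\Gamma$; it visually covers $X\subseteq\Gamma$ if each point of $X$ is visually covered by some guard in $F$. *)

From Stdlib Require Import Reals List.
Open Scope R_scope.

Definition point : Type := (R * R)%type.

Definition seg_pt (a b : point) (t : R) : point :=
  (fst a + t * (fst b - fst a), snd a + t * (snd b - snd a)).

Definition on_seg (a b p : point) : Prop :=
  exists t, 0 <= t <= 1 /\ p = seg_pt a b t.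

Definition pnorm (p : point) : R := sqrt (fst p * fst p + snd p * snd p).

(* A polygon is given by its cyclic list of vertices v_0, ..., v_{n-1};
   vertex indices are taken modulo n. *)
Definition vtx (P : list point) (i : nat) : point :=
  nth (Nat.modulo i (length P)) P (0, 0).

Definition edge_pt (P : list point) (i : nat) (p : point) : Prop :=
  on_seg (vtx P i) (vtx P (S i)) p.

Definition simple_polygon (P : list point) : Prop :=
  (3 <= length P)%nat /\
  forall i j : nat, (i < length P)%nat -> (j < length P)%nat -> i <> j ->
    forall p, edge_pt P i p -> edge_pt P j p ->
      (j = Nat.modulo (S i) (length P) /\ p = vtx P j) \/
      (i = Nat.modulo (S j) (length P) /\ p = vtx P i).

Definition boundary (P : list point) (p : point) : Prop :=
  exists i, (i < length P)%nat /\ edge_pt P i p.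

Definition path_in (X : point -> Prop) (f : R -> point) : Prop :=
  continuity (fun s => fst (f s)) /\ continuity (fun s => snd (f s)) /\
  forall t, 0 <= t <= 1 -> X (f t).

(* p lies in the unbounded component of the complement of the boundary *)
Definition exterior (P : list point) (p : point) : Prop :=
  ~ boundary P p /\
  forall M : R, exists f : R -> point,
    path_in (fun q => ~ boundary P q) f /\ f 0 = p /\ M <= pnorm (f 1).

(* interior = bounded component(s) of the complement of the boundary *)
Definition interior (P : list point) (p : point) : Prop :=
  ~ boundary P p /\ ~ exterior P p.

Definition gallery (P : list point) (p : point) : Prop :=
  boundary P p \/ interior P p.

Definition covers (P : list point) (g a : point) : Prop :=
  forall t, 0 <= t <= 1 -> gallery P (seg_pt g a t).

(* If a guard g does not see a point a of the gallery, the segment [g, a]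
   contains an exterior point; and if a is not on a wall, the ray from g through
   a meets a wall beyond a, since otherwise a could escape to infinity along it.
   With one guard, g sees that wall point behind a, hence a itself.  With two
   guards, let c be the last wall point of [g1, a] after an exterior point and b
   the first wall point beyond a.  The chord [c, b] lies in the gallery, and g1
   sees neither c nor b, so g2 sees both.  The triangle g2 c b then has its sides
   in the gallery and the exterior point of [g2, a] strictly inside it, which is
   impossible: a wall-avoiding path from that point to infinity must cross a
   side, and the crossing point would be both in the gallery and exterior. *)

From Stdlib Require Import Reals List Lra Lia Psatz Classical.
Open Scope R_scope.

Lemma point_eq (p q : point) : fst p = fst q -> snd p = snd q -> p = q.
Proof. destruct p, q; simpl; intros -> ->; reflexivity. Qed.

Lemma seg_pt_0 a b : seg_pt a b 0 = a.
Proof. apply point_eq; simpl; ring. Qed.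

Lemma seg_pt_1 a b : seg_pt a b 1 = b.
Proof. apply point_eq; simpl; ring. Qed.

Lemma seg_pt_diag a t : seg_pt a a t = a.
Proof. apply point_eq; simpl; ring. Qed.

Lemma seg_pt_sub g a s1 s2 t :
  seg_pt (seg_pt g a s1) (seg_pt g a s2) t = seg_pt g a (s1 + t * (s2 - s1)).
Proof. apply point_eq; simpl; ring. Qed.

Lemma seg_pt_rescale g a s t : 0 < s ->
  seg_pt g a t = seg_pt g (seg_pt g a s) (t / s).
Proof. intros Hs; apply point_eq; simpl; field; lra. Qed.

Lemma Rdiv_in_unit t s : 0 <= t <= s -> 0 < s -> 0 <= t / s <= 1.
Proof.
  intros Ht Hs; split.
  - apply Rle_mult_inv_pos; lra.
  - apply (Rmult_le_reg_r s); [lra|]; unfold Rdiv.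
    rewrite Rmult_assoc, Rinv_l by lra; lra.
Qed.

Lemma convex_gt x y z s : x < y -> x < z -> 0 <= s <= 1 -> x < (1 - s) * y + s * z.
Proof. intros; destruct (Rle_lt_dec s (1/2)); nra. Qed.

Lemma convex_lt x y z s : y < x -> z < x -> 0 <= s <= 1 -> (1 - s) * y + s * z < x.
Proof. intros; destruct (Rle_lt_dec s (1/2)); nra. Qed.

Lemma continuity_cst c : continuity (fun _ => c).
Proof. apply continuity_const; intros ? ?; reflexivity. Qed.

Lemma continuity_id : continuity (fun x => x).
Proof. exact (derivable_continuous id derivable_id). Qed.

Lemma continuity_Rabs f : continuity f -> continuity (fun x => Rabs (f x)).
Proof. intros Hf; exact (continuity_comp f Rabs Hf Rcontinuity_abs). Qed.

Lemma continuity_Ropp f : continuity f -> continuity (fun x => - f x).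
Proof. exact (continuity_opp f). Qed.

Lemma Rmax_abs x y : Rmax x y = (x + y + Rabs (x - y)) / 2.
Proof.
  unfold Rmax; destruct (Rle_dec x y);
    [rewrite Rabs_left1 by lra | rewrite Rabs_right by lra]; field.
Qed.

Lemma Rmin_Rmax x y : Rmin x y = x + y - Rmax x y.
Proof. unfold Rmin, Rmax; destruct (Rle_dec x y); ring. Qed.

Lemma continuity_ext f g : (forall x, f x = g x) -> continuity f -> continuity g.
Proof.
  intros E Hf x; apply (continuity_pt_locally_ext f g 1 x); auto; lra.
Qed.

Lemma continuity_Rmax f g : continuity f -> continuity g ->
  continuity (fun x => Rmax (f x) (g x)).
Proof.
  intros Hf Hg.
  apply (continuity_ext (fun x => (f x + g x + Rabs (f x - g x)) * / 2)).
  - intros x; rewrite Rmax_abs; reflexivity.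
  - apply continuity_mult; [|apply continuity_cst].
    apply continuity_plus; [apply continuity_plus; auto|].
    apply continuity_Rabs, continuity_minus; auto.
Qed.

Lemma continuity_Rmin f g : continuity f -> continuity g ->
  continuity (fun x => Rmin (f x) (g x)).
Proof.
  intros Hf Hg.
  apply (continuity_ext (fun x => f x + g x - Rmax (f x) (g x))).
  - intros x; rewrite Rmin_Rmax; reflexivity.
  - apply continuity_minus; [apply continuity_plus; auto | apply continuity_Rmax; auto].
Qed.

Ltac solve_continuity := repeat first
  [ apply continuity_plus | apply continuity_Ropp | apply continuity_minus
  | apply continuity_mult | apply continuity_Rmin | apply continuity_Rmax
  | apply continuity_id | apply continuity_cst | assumption ].

Lemma continuity_seg_pt_fst x y : continuity (fun t => fst (seg_pt x y t)).
Proof. unfold seg_pt; simpl; solve_continuity. Qed.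

Lemma continuity_seg_pt_snd x y : continuity (fun t => snd (seg_pt x y t)).
Proof. unfold seg_pt; simpl; solve_continuity. Qed.

Lemma path_seg (X : point -> Prop) x y :
  (forall t, 0 <= t <= 1 -> X (seg_pt x y t)) -> path_in X (seg_pt x y).
Proof.
  intros H; split; [|split]; auto.
  - apply continuity_seg_pt_fst.
  - apply continuity_seg_pt_snd.
Qed.

Lemma path_affine (X : point -> Prop) f c k :
  path_in X f -> (forall t, 0 <= t <= 1 -> 0 <= c + k * t <= 1) ->
  path_in X (fun t => f (c + k * t)).
Proof.
  intros [Hf1 [Hf2 Hf3]] Hck; split; [|split].
  - apply (continuity_comp (fun t => c + k * t) (fun s => fst (f s)));
      solve_continuity.
  - apply (continuity_comp (fun t => c + k * t) (fun s => snd (f s)));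
      solve_continuity.
  - intros t Ht; apply Hf3, Hck, Ht.
Qed.

Lemma path_concat (X : point -> Prop) f g :
  path_in X f -> path_in X g -> f 1 = g 0 ->
  exists h, path_in X h /\ h 0 = f 0 /\ h 1 = g 1.
Proof.
  intros [Hf1 [Hf2 Hf3]] [Hg1 [Hg2 Hg3]] Hfg.
  set (lo := fun s => 2 * Rmin s (1/2)).
  set (hi := fun s => 2 * Rmax s (1/2) - 1).
  (* equals [f (2 s)] on [0, 1/2] and [g (2 s - 1)] on [1/2, 1] *)
  set (h := fun s => (fst (f (lo s)) + fst (g (hi s)) - fst (f 1),
                      snd (f (lo s)) + snd (g (hi s)) - snd (f 1))).
  assert (Hlo : continuity lo) by (unfold lo; solve_continuity).
  assert (Hhi : continuity hi) by (unfold hi; solve_continuity).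
  assert (Hh : forall s, h s = if Rle_dec s (1/2) then f (2 * s) else g (2 * s - 1)).
  { intros s; unfold h, lo, hi, Rmin, Rmax.
    destruct (Rle_dec s (1/2)).
    - replace (2 * (1/2) - 1) with 0 by field; rewrite <- Hfg.
      apply point_eq; simpl; ring.
    - replace (2 * (1/2)) with 1 by field; rewrite Hfg.
      apply point_eq; simpl; ring. }
  exists h; split; [split; [|split]|split].
  - unfold h; simpl; solve_continuity.
    + apply (continuity_comp lo (fun s => fst (f s))); auto.
    + apply (continuity_comp hi (fun s => fst (g s))); auto.
  - unfold h; simpl; solve_continuity.
    + apply (continuity_comp lo (fun s => snd (f s))); auto.
    + apply (continuity_comp hi (fun s => snd (g s))); auto.
  - intros t Ht; rewrite Hh; destruct (Rle_dec t (1/2)).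
    + apply Hf3; lra.
    + apply Hg3; lra.
  - rewrite Hh; destruct (Rle_dec 0 (1/2)); [|lra].
    rewrite Rmult_0_r; reflexivity.
  - rewrite Hh; destruct (Rle_dec 1 (1/2)); [lra|].
    replace (2 * 1 - 1) with 1 by ring; reflexivity.
Qed.

Lemma gallery_not_exterior P p : gallery P p -> ~ exterior P p.
Proof. intros [Hb | [_ Hi]] He; [destruct He as [Hnb _] |]; auto. Qed.

Lemma not_gallery_exterior P p : ~ gallery P p -> exterior P p.
Proof.
  intros H; apply NNPP; intros He; apply H; right; split; auto.
  intros Hb; apply H; left; exact Hb.
Qed.

Lemma exterior_path P f :
  path_in (fun q => ~ boundary P q) f -> exterior P (f 1) -> exterior P (f 0).
Proof.
  intros Hf [_ Hfar]; split.
  - destruct Hf as [_ [_ Hf]]; apply Hf; lra.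
  - intros M; destruct (Hfar M) as [g [Hg [Hg0 HgM]]].
    destruct (path_concat _ f g Hf Hg (eq_sym Hg0)) as [h [Hh [Hh0 Hh1]]].
    exists h; rewrite Hh0, Hh1; auto.
Qed.

Lemma exterior_seg P x y :
  (forall t, 0 <= t <= 1 -> ~ boundary P (seg_pt x y t)) ->
  exterior P y -> exterior P x.
Proof.
  intros H Hy; rewrite <- (seg_pt_0 x y).
  apply exterior_path; [apply path_seg, H | rewrite seg_pt_1; exact Hy].
Qed.

Lemma Rabs_fst_le_pnorm p : Rabs (fst p) <= pnorm p.
Proof.
  unfold pnorm; rewrite <- sqrt_Rsqr_abs; apply sqrt_le_1_alt.
  unfold Rsqr; nra.
Qed.

Lemma Rabs_snd_le_pnorm p : Rabs (snd p) <= pnorm p.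
Proof.
  unfold pnorm; rewrite <- sqrt_Rsqr_abs; apply sqrt_le_1_alt.
  unfold Rsqr; nra.
Qed.

Lemma pnorm_le_Rabs p : pnorm p <= Rabs (fst p) + Rabs (snd p).
Proof.
  unfold pnorm.
  rewrite <- (sqrt_Rsqr (Rabs (fst p) + Rabs (snd p)))
    by (pose proof (Rabs_pos (fst p)); pose proof (Rabs_pos (snd p)); lra).
  apply sqrt_le_1_alt; unfold Rsqr.
  assert (Ex : Rabs (fst p) * Rabs (fst p) = fst p * fst p)
    by (rewrite <- Rabs_mult; apply Rabs_right; nra).
  assert (Ey : Rabs (snd p) * Rabs (snd p) = snd p * snd p)
    by (rewrite <- Rabs_mult; apply Rabs_right; nra).
  pose proof (Rabs_pos (fst p)); pose proof (Rabs_pos (snd p)); nra.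
Qed.

Lemma affine_unbounded c d M : d <> 0 -> exists s, 1 <= s /\ M <= Rabs (c + s * d).
Proof.
  intros Hd; assert (Hd' : 0 < Rabs d) by (apply Rabs_pos_lt; exact Hd).
  assert (Hk : 0 <= (Rabs M + Rabs c) / Rabs d).
  { apply Rle_mult_inv_pos; [pose proof (Rabs_pos M); pose proof (Rabs_pos c); lra | exact Hd']. }
  exists (1 + (Rabs M + Rabs c) / Rabs d); split; [lra|].
  pose proof (Rabs_triang_inv ((1 + (Rabs M + Rabs c) / Rabs d) * d) (- c)) as Htri.
  rewrite Rabs_Ropp, Rabs_mult, (Rabs_right (1 + _)) in Htri by lra.
  replace (_ * d - - c) with (c + (1 + (Rabs M + Rabs c) / Rabs d) * d) in Htri by ring.
  assert (E : (1 + (Rabs M + Rabs c) / Rabs d) * Rabs d = Rabs d + Rabs M + Rabs c)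
    by (field; lra).
  pose proof (Rle_abs M); lra.
Qed.

Lemma seg_pt_unbounded g a M : g <> a -> exists s, 1 <= s /\ M <= pnorm (seg_pt g a s).
Proof.
  intros Hga.
  destruct (Req_dec (fst a - fst g) 0) as [E1 | E1].
  - destruct (Req_dec (snd a - snd g) 0) as [E2 | E2].
    + exfalso; apply Hga, point_eq; lra.
    + destruct (affine_unbounded (snd g) (snd a - snd g) M E2) as [s [Hs HM]].
      exists s; split; auto.
      eapply Rle_trans; [exact HM | apply (Rabs_snd_le_pnorm (seg_pt g a s))].
  - destruct (affine_unbounded (fst g) (fst a - fst g) M E1) as [s [Hs HM]].
    exists s; split; auto.
    eapply Rle_trans; [exact HM | apply (Rabs_fst_le_pnorm (seg_pt g a s))].
Qed.

Lemma exterior_of_free_ray P g a : g <> a ->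
  (forall s, 1 <= s -> ~ boundary P (seg_pt g a s)) -> exterior P a.
Proof.
  intros Hga Hray; split.
  - rewrite <- (seg_pt_1 g a); apply Hray; lra.
  - intros M; destruct (seg_pt_unbounded g a M Hga) as [s [Hs HM]].
    exists (seg_pt a (seg_pt g a s)); split; [|split].
    + apply path_seg; intros t Ht.
      rewrite <- (seg_pt_1 g a) at 1; rewrite seg_pt_sub; apply Hray; nra.
    + apply seg_pt_0.
    + rewrite seg_pt_1; exact HM.
Qed.

Definition sqdist (p q : point) : R :=
  (fst p - fst q) * (fst p - fst q) + (snd p - snd q) * (snd p - snd q).

Definition adherent (X : point -> Prop) (p : point) : Prop :=
  forall d, 0 < d -> exists q, X q /\ sqdist q p < d.

Definition closed_real (Q : R -> Prop) : Prop :=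
  forall s, (forall e, 0 < e -> exists u, Rabs (u - s) < e /\ Q u) -> Q s.

Lemma sqdist_ge0 p q : 0 <= sqdist p q.
Proof.
  pose proof (Rle_0_sqr (fst p - fst q)); pose proof (Rle_0_sqr (snd p - snd q)).
  unfold sqdist, Rsqr in *; lra.
Qed.

Lemma sqdist_small_eq p q : (forall d, 0 < d -> sqdist p q < d) -> p = q.
Proof.
  intros H; destruct (Req_dec (sqdist p q) 0) as [E | E].
  - apply Rplus_sqr_eq_0 in E as [E1 E2]; apply point_eq; lra.
  - pose proof (sqdist_ge0 p q); specialize (H (sqdist p q / 2)); lra.
Qed.

Lemma on_seg_closed v w p : adherent (on_seg v w) p -> on_seg v w p.
Proof.
  intros H; set (N := sqdist w v).
  destruct (Req_dec N 0) as [HN | HN].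
  - assert (Hwv : w = v) by (apply sqdist_small_eq; intros d Hd; fold N; lra).
    subst w; exists 0; split; [lra|]; rewrite seg_pt_0.
    apply eq_sym, sqdist_small_eq; intros d Hd.
    destruct (H d Hd) as [q [[t [_ ->]] Hq]]; rewrite seg_pt_diag in Hq; exact Hq.
  - assert (HNp : 0 < N) by (pose proof (sqdist_ge0 w v) as Hge; fold N in Hge; lra).
    (* [ts] is the parameter of the orthogonal projection of [p] on the line [vw] *)
    set (ts := ((fst p - fst v) * (fst w - fst v) + (snd p - snd v) * (snd w - snd v)) / N).
    assert (Pyth : forall t, sqdist (seg_pt v w t) p
                             = sqdist (seg_pt v w ts) p + (t - ts) * (t - ts) * N).
    { intros t; unfold sqdist, seg_pt, ts, N, sqdist in *; simpl; field; exact HN. }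
    assert (Far : forall d, 0 < d ->
                  (forall t, 0 <= t <= 1 -> d <= (t - ts) * (t - ts) * N) -> False).
    { intros d Hd Ht; destruct (H d Hd) as [q [[t [Ht01 ->]] Hq]].
      rewrite Pyth in Hq; pose proof (sqdist_ge0 (seg_pt v w ts) p).
      specialize (Ht t Ht01); lra. }
    exists ts; split; [split|].
    + apply Rnot_lt_le; intros Hts; apply (Far (ts * ts * N)).
      * apply Rmult_lt_0_compat; nra.
      * intros t Ht; apply Rmult_le_compat_r; nra.
    + apply Rnot_lt_le; intros Hts; apply (Far ((ts - 1) * (ts - 1) * N)).
      * apply Rmult_lt_0_compat; nra.
      * intros t Ht; apply Rmult_le_compat_r; nra.
    + apply eq_sym, sqdist_small_eq; intros d Hd.
      destruct (H d Hd) as [q [[t [_ ->]] Hq]]; rewrite Pyth in Hq.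
      assert (0 <= (t - ts) * (t - ts) * N) by (apply Rmult_le_pos; [apply Rle_0_sqr | lra]); lra.
Qed.

Lemma adherent_impl (X Y : point -> Prop) p :
  (forall q, X q -> Y q) -> adherent X p -> adherent Y p.
Proof.
  intros XY H d Hd; destruct (H d Hd) as [q [Xq Hq]]; exists q; auto.
Qed.

Lemma not_adherent (X : point -> Prop) p :
  ~ adherent X p -> exists d, 0 < d /\ forall q, X q -> d <= sqdist q p.
Proof.
  intros HX; apply NNPP; intros Hn; apply HX; intros d Hd.
  apply NNPP; intros Hq; apply Hn; exists d; split; auto.
  intros q Xq; apply Rnot_lt_le; intros Hlt; apply Hq; exists q; auto.
Qed.

Lemma adherent_or (X Y : point -> Prop) p :
  adherent (fun q => X q \/ Y q) p -> adherent X p \/ adherent Y p.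
Proof.
  intros H; apply NNPP; intros Hn; apply not_or_and in Hn as [HX HY].
  destruct (not_adherent X p HX) as [d1 [Hd1 H1]].
  destruct (not_adherent Y p HY) as [d2 [Hd2 H2]].
  pose proof (Rmin_l d1 d2); pose proof (Rmin_r d1 d2).
  destruct (H (Rmin d1 d2) (Rmin_pos _ _ Hd1 Hd2)) as [q [[Xq | Yq] Hq]].
  - specialize (H1 q Xq); lra.
  - specialize (H2 q Yq); lra.
Qed.

Lemma closed_finite_union (X : nat -> point -> Prop) n :
  (forall i p, (i < n)%nat -> adherent (X i) p -> X i p) ->
  forall p, adherent (fun q => exists i, (i < n)%nat /\ X i q) p ->
  exists i, (i < n)%nat /\ X i p.
Proof.
  induction n as [|n IH]; intros HX p Hp.
  - destruct (Hp 1 Rlt_0_1) as [q [[i [Hi _]] _]]; lia.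
  - assert (Hsplit : adherent (fun q => (exists i, (i < n)%nat /\ X i q) \/ X n q) p).
    { apply (adherent_impl _ _ p) with (2 := Hp); intros q [i [Hi Xq]].
      destruct (Nat.eq_dec i n) as [-> | Hne]; [right | left; exists i; split]; auto; lia. }
    destruct (adherent_or _ _ _ Hsplit) as [H | H].
    + destruct (IH (fun i q Hi => HX i q (Nat.lt_lt_succ_r _ _ Hi)) p H) as [i [Hi Xp]].
      exists i; split; [lia | exact Xp].
    + exists n; split; [lia | apply HX; [lia | exact H]].
Qed.

Lemma boundary_closed P p : adherent (boundary P) p -> boundary P p.
Proof.
  apply (closed_finite_union (edge_pt P) (length P)).
  intros i q _; apply on_seg_closed.
Qed.

Lemma closed_real_line_preimage (X : point -> Prop) g a :
  (forall p, adherent X p -> X p) -> closed_real (fun u => X (seg_pt g a u)).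
Proof.
  intros HX s Hs; apply HX; intros d Hd.
  set (N := sqdist a g).
  assert (HN : 0 <= N) by apply sqdist_ge0.
  set (e := Rmin 1 (d / (N + 1))).
  assert (He : 0 < e) by (apply Rmin_pos; [lra | apply Rdiv_lt_0_compat; lra]).
  assert (He1 : e <= 1) by apply Rmin_l.
  assert (HeN : e * (N + 1) <= d).
  { pose proof (Rmin_r 1 (d / (N + 1))) as He2; fold e in He2.
    apply (Rmult_le_compat_r (N + 1)) in He2; [|lra].
    unfold Rdiv in He2; rewrite Rmult_assoc, Rinv_l in He2 by lra; lra. }
  destruct (Hs e He) as [u [Hu Xu]]; exists (seg_pt g a u); split; auto.
  replace (sqdist (seg_pt g a u) (seg_pt g a s)) with ((u - s) * (u - s) * N)
    by (unfold sqdist, seg_pt, N, sqdist; simpl; ring).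
  assert ((u - s) * (u - s) < e) by (apply Rabs_def2 in Hu; nra).
  nra.
Qed.

Lemma closed_real_last (Q : R -> Prop) u0 hi :
  closed_real Q -> u0 <= hi -> Q u0 ->
  exists s, u0 <= s <= hi /\ Q s /\ forall u, s < u <= hi -> ~ Q u.
Proof.
  intros HQ Hu0 Qu0.
  set (E := fun u => u0 <= u <= hi /\ Q u).
  destruct (completeness E) as [m [Hub Hlub]].
  - exists hi; intros u [Hu _]; lra.
  - exists u0; split; [lra | exact Qu0].
  - assert (Hm0 : u0 <= m) by (apply Hub; split; [lra | exact Qu0]).
    assert (Hm1 : m <= hi) by (apply Hlub; intros u [Hu _]; lra).
    exists m; split; [lra | split].
    + apply HQ; intros e He; apply NNPP; intros Hn.
      assert (m <= m - e); [|lra].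
      apply Hlub; intros u [Hu Qu]; apply Rnot_lt_le; intros Hlt; apply Hn.
      exists u; split; auto.
      assert (u <= m) by (apply Hub; split; auto).
      apply Rabs_def1; lra.
    + intros u Hu Qu; assert (u <= m) by (apply Hub; split; [lra | exact Qu]); lra.
Qed.

Lemma closed_real_opp (Q : R -> Prop) : closed_real Q -> closed_real (fun u => Q (- u)).
Proof.
  intros HQ s Hs; apply HQ; intros e He.
  destruct (Hs e He) as [u [Hu Qu]]; exists (- u); split; auto.
  replace (- u - - s) with (- (u - s)) by ring; rewrite Rabs_Ropp; exact Hu.
Qed.

Lemma closed_real_first (Q : R -> Prop) lo u0 :
  closed_real Q -> lo <= u0 -> Q u0 ->
  exists s, lo <= s <= u0 /\ Q s /\ forall u, lo <= u < s -> ~ Q u.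
Proof.
  intros HQ Hu0 Qu0.
  destruct (closed_real_last (fun u => Q (- u)) (- u0) (- lo)) as [s [Hs [Qs Hn]]].
  - apply closed_real_opp, HQ.
  - lra.
  - rewrite Ropp_involutive; exact Qu0.
  - exists (- s); split; [lra | split; auto].
    intros u Hu Qu; apply (Hn (- u)); [lra | rewrite Ropp_involutive; exact Qu].
Qed.

Definition tri_pt (A B C : point) (b c : R) : point :=
  (fst A + b * (fst B - fst A) + c * (fst C - fst A),
   snd A + b * (snd B - snd A) + c * (snd C - snd A)).

Definition det (A B C : point) : R :=
  (fst B - fst A) * (snd C - snd A) - (snd B - snd A) * (fst C - fst A).

Definition on_side (A B C p : point) : Prop :=
  on_seg A B p \/ on_seg A C p \/ on_seg B C p.

Lemma gallery_on_side P A B C p :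
  covers P A B -> covers P A C -> covers P B C -> on_side A B C p -> gallery P p.
Proof. intros HAB HAC HBC [[t [Ht ->]] | [[t [Ht ->]] | [t [Ht ->]]]]; auto. Qed.

Lemma tri_pt_on_side A B C b c : 0 <= b -> 0 <= c -> b + c <= 1 ->
  Rmin (1 - b - c) (Rmin b c) = 0 -> on_side A B C (tri_pt A B C b c).
Proof.
  intros Hb Hc Hbc Hmin.
  assert (Hcases : b + c = 1 \/ b = 0 \/ c = 0).
  { unfold Rmin in Hmin; destruct (Rle_dec b c), (Rle_dec (1 - b - c) _); lra. }
  destruct Hcases as [E | [E | E]].
  - right; right; exists c; split; [lra|].
    apply point_eq; simpl; replace b with (1 - c) by lra; ring.
  - right; left; exists c; split; [lra|].
    apply point_eq; simpl; rewrite E; ring.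
  - left; exists b; split; [lra|].
    apply point_eq; simpl; rewrite E; ring.
Qed.

Lemma det_zero_seg_pt A B C : det A B C = 0 -> B <> A ->
  exists k, C = seg_pt A B k.
Proof.
  destruct A as [a1 a2], B as [b1 b2], C as [c1 c2]; unfold det; simpl.
  intros HD HBA.
  set (N := (b1 - a1) * (b1 - a1) + (b2 - a2) * (b2 - a2)).
  assert (HN : N <> 0).
  { intros HN; apply Rplus_sqr_eq_0 in HN as [E1 E2]; apply HBA, point_eq; simpl; lra. }
  set (dot := (c1 - a1) * (b1 - a1) + (c2 - a2) * (b2 - a2)).
  exists (dot / N); apply point_eq; simpl; apply (Rmult_eq_reg_r N); try exact HN.
  - replace ((a1 + dot / N * (b1 - a1)) * N) with (a1 * N + dot * (b1 - a1))
      by (field; exact HN).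
    match goal with |- ?l = ?r =>
      assert (E : l - r = - (b2 - a2) * ((b1 - a1) * (c2 - a2) - (b2 - a2) * (c1 - a1)))
        by (unfold dot, N; ring) end.
    rewrite HD in E; lra.
  - replace ((a2 + dot / N * (b2 - a2)) * N) with (a2 * N + dot * (b2 - a2))
      by (field; exact HN).
    match goal with |- ?l = ?r =>
      assert (E : l - r = (b1 - a1) * ((b1 - a1) * (c2 - a2) - (b2 - a2) * (c1 - a1)))
        by (unfold dot, N; ring) end.
    rewrite HD in E; lra.
Qed.

Lemma collinear_tri_pt_on_side A B C b c : det A B C = 0 ->
  0 <= b -> 0 <= c -> b + c <= 1 -> on_side A B C (tri_pt A B C b c).
Proof.
  intros HD Hb Hc Hbc.
  destruct (classic (B = A)) as [-> | HBA].
  { right; left; exists c; split; [lra|]; apply point_eq; simpl; ring. }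
  destruct (det_zero_seg_pt A B C HD HBA) as [k ->].
  (* the point is [seg_pt A B mu], and [mu] lies between [0], [1] and [k] *)
  set (mu := b + c * k).
  replace (tri_pt _ _ _ b c) with (seg_pt A B mu) by (apply point_eq; simpl; unfold mu; ring).
  destruct (Rle_lt_dec 0 mu) as [Hm0 | Hm0]; [destruct (Rle_lt_dec mu 1) as [Hm1 | Hm1] |].
  - left; exists mu; split; [lra | reflexivity].
  - assert (Hk : 1 < k) by (unfold mu in Hm1; nra).
    right; left; exists (mu / k); split.
    + apply Rdiv_in_unit; [split; unfold mu in *; nra | lra].
    + apply seg_pt_rescale; lra.
  - assert (Hk : k < 0) by (unfold mu in Hm0; nra).
    right; right; exists ((1 - mu) / (1 - k)); split.
    + apply Rdiv_in_unit; [split; unfold mu in *; nra | lra].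
    + rewrite <- (seg_pt_1 A B) at 2; rewrite seg_pt_sub.
      f_equal; field; lra.
Qed.

Lemma tri_pt_det A B C p : det A B C <> 0 ->
  tri_pt A B C (det A p C / det A B C) (det A B p / det A B C) = p.
Proof. intros HD; unfold det in *; apply point_eq; simpl; field; exact HD. Qed.

Lemma det_tri_pt_b A B C b c : det A B C <> 0 -> det A (tri_pt A B C b c) C / det A B C = b.
Proof. intros HD; unfold det in *; simpl; field; exact HD. Qed.

Lemma det_tri_pt_c A B C b c : det A B C <> 0 -> det A B (tri_pt A B C b c) / det A B C = c.
Proof. intros HD; unfold det in *; simpl; field; exact HD. Qed.

Definition tri_bound (A B C : point) : R :=
  Rabs (fst A) + Rabs (fst B) + Rabs (fst C) + Rabs (snd A) + Rabs (snd B) + Rabs (snd C).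

Lemma Rabs_convex3 wa wb wc x y z : 0 <= wa -> 0 <= wb -> 0 <= wc -> wa + wb + wc = 1 ->
  Rabs (wa * x + wb * y + wc * z) <= Rabs x + Rabs y + Rabs z.
Proof.
  intros Ha Hb Hc Hs.
  eapply Rle_trans; [apply Rabs_triang|].
  eapply Rle_trans; [apply Rplus_le_compat_r, Rabs_triang|].
  rewrite !Rabs_mult, (Rabs_right wa), (Rabs_right wb), (Rabs_right wc) by lra.
  pose proof (Rabs_pos x); pose proof (Rabs_pos y); pose proof (Rabs_pos z); nra.
Qed.

Lemma pnorm_tri_pt_le A B C b c : 0 <= b -> 0 <= c -> b + c <= 1 ->
  pnorm (tri_pt A B C b c) <= tri_bound A B C.
Proof.
  intros Hb Hc Hbc; eapply Rle_trans; [apply pnorm_le_Rabs|].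
  pose proof (Rabs_convex3 (1 - b - c) b c (fst A) (fst B) (fst C)) as H1.
  pose proof (Rabs_convex3 (1 - b - c) b c (snd A) (snd B) (snd C)) as H2.
  unfold tri_bound, tri_pt; simpl.
  replace (fst A + b * (fst B - fst A) + c * (fst C - fst A))
    with ((1 - b - c) * fst A + b * fst B + c * fst C) by ring.
  replace (snd A + b * (snd B - snd A) + c * (snd C - snd A))
    with ((1 - b - c) * snd A + b * snd B + c * snd C) by ring.
  assert (0 <= 1 - b - c) by lra.
  specialize (H1 ltac:(lra) Hb Hc ltac:(ring)).
  specialize (H2 ltac:(lra) Hb Hc ltac:(ring)); lra.
Qed.

Lemma path_meets_side A B C f b c : det A B C <> 0 ->
  continuity (fun t => fst (f t)) -> continuity (fun t => snd (f t)) ->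
  0 < b -> 0 < c -> b + c < 1 -> f 0 = tri_pt A B C b c ->
  tri_bound A B C < pnorm (f 1) ->
  exists t, 0 <= t <= 1 /\ on_side A B C (f t).
Proof.
  intros HD Hf1 Hf2 Hb Hc Hbc Hf0 Hfar.
  set (wb := fun t => det A (f t) C / det A B C).
  set (wc := fun t => det A B (f t) / det A B C).
  (* [phi t] is the smallest barycentric coordinate of [f t]: it vanishes exactly on the sides *)
  set (phi := fun t => Rmin (1 - wb t - wc t) (Rmin (wb t) (wc t))).
  assert (Hphi : continuity phi) by (unfold phi, wb, wc, det, Rdiv; solve_continuity).
  assert (Hin : forall t, 0 <= phi t -> 0 <= wb t /\ 0 <= wc t /\ wb t + wc t <= 1).
  { intros t Ht; unfold phi in Ht.
    pose proof (Rmin_l (1 - wb t - wc t) (Rmin (wb t) (wc t))).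
    pose proof (Rmin_r (1 - wb t - wc t) (Rmin (wb t) (wc t))).
    pose proof (Rmin_l (wb t) (wc t)); pose proof (Rmin_r (wb t) (wc t)); lra. }
  assert (Hf : forall t, f t = tri_pt A B C (wb t) (wc t))
    by (intros t; unfold wb, wc; rewrite tri_pt_det; auto).
  assert (Hp0 : 0 < phi 0).
  { unfold phi, wb, wc; rewrite Hf0, det_tri_pt_b, det_tri_pt_c by exact HD.
    apply Rmin_glb_lt; [lra | apply Rmin_glb_lt; lra]. }
  assert (Hp1 : phi 1 < 0).
  { apply Rnot_le_lt; intros H1; destruct (Hin 1 H1) as [? [? ?]].
    pose proof (pnorm_tri_pt_le A B C (wb 1) (wc 1)); rewrite <- Hf in *; lra. }
  destruct (IVT (fun t => - phi t) 0 1) as [t [Ht Hz]];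
    [apply continuity_Ropp, Hphi | lra | lra | lra |].
  exists t; split; [exact Ht|].
  destruct (Hin t ltac:(lra)) as [? [? ?]].
  rewrite Hf; apply tri_pt_on_side; auto; fold (phi t); lra.
Qed.

Lemma triangle_not_exterior P A B C b c :
  covers P A B -> covers P A C -> covers P B C ->
  0 < b -> 0 < c -> b + c < 1 -> ~ exterior P (tri_pt A B C b c).
Proof.
  intros HAB HAC HBC Hb Hc Hbc Hext.
  destruct (Req_dec (det A B C) 0) as [HD | HD].
  { apply (gallery_not_exterior P _ (gallery_on_side P A B C _ HAB HAC HBC
      (collinear_tri_pt_on_side A B C b c HD ltac:(lra) ltac:(lra) ltac:(lra))) Hext). }
  pose proof Hext as [_ Hfar].
  destruct (Hfar (tri_bound A B C + 1)) as [f [Hf [Hf0 Hf1]]].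
  destruct (path_meets_side A B C f b c HD) as [t [Ht Hside]];
    [apply Hf | apply Hf | auto | auto | auto | auto | lra |].
  apply (gallery_not_exterior P (f t)); [apply (gallery_on_side P A B C); auto|].
  replace (f t) with (f (t + - t * 0)) by (f_equal; ring).
  apply (exterior_path P (fun s => f (t + - t * s))).
  - apply path_affine; [exact Hf | intros s Hs; nra].
  - replace (t + - t * 1) with 0 by ring; rewrite Hf0; exact Hext.
Qed.

Lemma covers_refl P a : gallery P a -> covers P a a.
Proof. intros H t _; rewrite seg_pt_diag; exact H. Qed.

Lemma gallery_before P g a s tau : 0 < s -> 0 <= tau <= s ->
  covers P g (seg_pt g a s) -> gallery P (seg_pt g a tau).
Proof.
  intros Hs Htau H; rewrite (seg_pt_rescale g a s tau Hs).
  apply H, Rdiv_in_unit; assumption.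
Qed.

Lemma covers_prefix P g a s : 1 <= s -> covers P g (seg_pt g a s) -> covers P g a.
Proof. intros Hs H t Ht; apply (gallery_before P g a s); auto; lra. Qed.

Lemma exterior_of_not_covers P g a : gallery P g -> gallery P a -> ~ covers P g a ->
  exists t, 0 < t < 1 /\ exterior P (seg_pt g a t).
Proof.
  intros Hg Ha Hn; apply NNPP; intros H; apply Hn; intros t Ht.
  apply NNPP; intros Hng; apply H; exists t; split; [|apply not_gallery_exterior, Hng].
  split; apply Rnot_le_lt; intros Hle.
  - replace t with 0 in Hng by lra; rewrite seg_pt_0 in Hng; contradiction.
  - replace t with 1 in Hng by lra; rewrite seg_pt_1 in Hng; contradiction.
Qed.

Lemma boundary_beyond P g a : interior P a -> g <> a ->
  exists s, 1 <= s /\ boundary P (seg_pt g a s).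
Proof.
  intros [_ Hna] Hga; apply NNPP; intros H; apply Hna, (exterior_of_free_ray P g a Hga).
  intros s Hs Hb; apply H; exists s; auto.
Qed.

Lemma one_guard P g a : interior P a -> g <> a ->
  (forall b, boundary P b -> covers P g b) -> covers P g a.
Proof.
  intros Ha Hga Hcov; destruct (boundary_beyond P g a Ha Hga) as [s [Hs Hb]].
  exact (covers_prefix P g a s Hs (Hcov _ Hb)).
Qed.

Lemma chord_through P g a t1 : interior P a -> g <> a -> 0 < t1 < 1 ->
  exterior P (seg_pt g a t1) ->
  exists sc sb, t1 <= sc < 1 /\ 1 < sb /\
    boundary P (seg_pt g a sc) /\ boundary P (seg_pt g a sb) /\
    covers P (seg_pt g a sc) (seg_pt g a sb).
Proof.
  intros Ha Hga Ht1 He1; pose proof Ha as [Hab Hae].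
  set (Q := fun u => boundary P (seg_pt g a u)).
  assert (HQ : closed_real Q) by apply (closed_real_line_preimage _ g a (boundary_closed P)).
  assert (HQ1 : ~ Q 1) by (unfold Q; rewrite seg_pt_1; exact Hab).
  assert (Hbefore : exists u0, t1 <= u0 <= 1 /\ Q u0).
  { apply NNPP; intros H; apply Hae; rewrite <- (seg_pt_1 g a).
    apply (exterior_seg P _ (seg_pt g a t1)); [|exact He1].
    intros t Ht Hb; rewrite seg_pt_sub in Hb; apply H; eexists; split; [|exact Hb]; nra. }
  destruct Hbefore as [u0 [Hu0 Qu0]].
  destruct (closed_real_last Q u0 1 HQ ltac:(lra) Qu0) as [sc [Hsc [Qsc Hnc]]].
  destruct (boundary_beyond P g a Ha Hga) as [s0 [Hs0 Qs0]].
  destruct (closed_real_first Q 1 s0 HQ Hs0 Qs0) as [sb [Hsb [Qsb Hnb]]].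
  assert (Hsc1 : sc < 1) by (destruct (Req_dec sc 1) as [-> |]; [contradiction | lra]).
  assert (Hsb1 : 1 < sb) by (destruct (Req_dec sb 1) as [-> |]; [contradiction | lra]).
  assert (Hfree : forall u, sc < u < sb -> ~ Q u).
  { intros u Hu; destruct (Rle_lt_dec u 1); [apply Hnc | apply Hnb]; lra. }
  exists sc, sb; split; [lra | split; [lra | split; [exact Qsc | split; [exact Qsb |]]]].
  intros t Ht; rewrite seg_pt_sub; set (u := sc + t * (sb - sc)).
  destruct (Req_dec t 0) as [-> | Ht0].
  { left; unfold u; rewrite Rmult_0_l, Rplus_0_r; exact Qsc. }
  destruct (Req_dec t 1) as [-> | Ht1'].
  { left; unfold u; replace (sc + 1 * (sb - sc)) with sb by ring; exact Qsb. }
  assert (Hu : sc < u < sb) by (unfold u; split; nra).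
  right; split; [apply Hfree, Hu|]; intros Heu; apply Hae.
  rewrite <- (seg_pt_1 g a); apply (exterior_seg P _ (seg_pt g a u)); [|exact Heu].
  intros s Hs; rewrite seg_pt_sub; apply Hfree.
  replace (1 + s * (u - 1)) with ((1 - s) * 1 + s * u) by ring.
  split; [apply convex_gt | apply convex_lt]; lra.
Qed.

Lemma two_guards P g1 g2 a : gallery P g1 -> gallery P g2 -> interior P a -> g1 <> a ->
  ~ covers P g1 a -> ~ covers P g2 a ->
  (forall b, boundary P b -> covers P g1 b \/ covers P g2 b) -> False.
Proof.
  intros Hg1 Hg2 Ha Hga Hn1 Hn2 Hcov.
  assert (Hagal : gallery P a) by (right; exact Ha).
  destruct (exterior_of_not_covers P g1 a Hg1 Hagal Hn1) as [t1 [Ht1 He1]].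
  destruct (chord_through P g1 a t1 Ha Hga Ht1 He1)
    as [sc [sb [Hsc [Hsb [Hbc [Hbb Hcb]]]]]].
  assert (Hc : covers P g2 (seg_pt g1 a sc)).
  { destruct (Hcov _ Hbc) as [H | H]; auto; exfalso.
    apply (gallery_not_exterior P (seg_pt g1 a t1)); [|exact He1].
    apply (gallery_before P g1 a sc); [lra | lra | exact H]. }
  assert (Hb : covers P g2 (seg_pt g1 a sb)).
  { destruct (Hcov _ Hbb) as [H | H]; auto; exfalso.
    apply Hn1, (covers_prefix P g1 a sb); [lra | exact H]. }
  destruct (exterior_of_not_covers P g2 a Hg2 Hagal Hn2) as [t2 [Ht2 He2]].
  (* [a] divides the chord in the ratio [lam], so [seg_pt g2 a t2] lies inside the triangle *)
  set (lam := (1 - sc) / (sb - sc)).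
  assert (Hlam : 0 < lam < 1).
  { unfold lam; split; [apply Rdiv_lt_0_compat; lra|].
    apply (Rmult_lt_reg_r (sb - sc)); [lra|]; unfold Rdiv.
    rewrite Rmult_assoc, Rinv_l by lra; lra. }
  apply (triangle_not_exterior P g2 (seg_pt g1 a sc) (seg_pt g1 a sb)
           (t2 * (1 - lam)) (t2 * lam) Hc Hb Hcb); [nra | nra | nra |].
  replace (tri_pt _ _ _ _ _) with (seg_pt g2 a t2); [exact He2|].
  apply point_eq; unfold tri_pt, seg_pt, lam; simpl; field; lra.
Qed.

Theorem proposition3 :
  forall P : list point, simple_polygon P ->
  forall F : list point, (1 <= length F <= 2)%nat ->
  (forall g, In g F -> gallery P g) ->
  (forall a, boundary P a -> exists g, In g F /\ covers P g a) ->
  forall a, gallery P a -> exists g, In g F /\ covers P g a.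
Proof.
  intros P _ F HF Hgal Hbnd a Ha.
  destruct (classic (exists g, In g F /\ covers P g a)) as [Hyes | Hno]; [exact Hyes | exfalso].
  assert (Hnc : forall g, In g F -> ~ covers P g a) by (intros g Hg Hc; apply Hno; eauto).
  destruct Ha as [Hb | Hint]; [exact (Hno (Hbnd a Hb)) |].
  assert (Hne : forall g, In g F -> g <> a).
  { intros g Hg ->; apply (Hnc a Hg), covers_refl, Hgal, Hg. }
  destruct F as [| g1 [| g2 [| g3 F]]]; simpl in HF; try lia.
  - apply (Hnc g1 (or_introl eq_refl)), one_guard; auto using in_eq.
    intros b Hb; destruct (Hbnd b Hb) as [g [[<- | []] Hc]]; exact Hc.
  - apply (two_guards P g1 g2 a); auto using in_eq, in_cons.
    intros b Hb; destruct (Hbnd b Hb) as [g [[<- | [<- | []]] Hc]]; auto.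
Qed.
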